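(* Let $\lambda,N,t,m,v$ be positive integers with $t\ge 2$ and $t\le m(t-1)$. There exists an $OCA_{\lambda}(N;t,m,t,v)$ if and only if there exists an $OCA_{\lambda}(N;t,m,t-1,v)$.
   Context: For positive integers $m,s$, the RT poset $[m\times s]$ is the set $\{1,\ldots,ms\}$ partitioned into $m$ blocks $B_i=\{is+1,\ldots,(i+1)s\}$ ($i=0,\ldots,m-1$); each block is a chain under the usual order of the integers, and elements of different blocks are incomparable. An ideal is a subset $I$ such that $b\in I$ and $a\preceq b$ imply $a\in I$; an anti-ideal is the complement of an ideal. Given an $N\times n$ array over an alphabet $V$ of size $v$, a set of $t$ columns is $\lambda$-covered if in the $N\times t$ subarray formed by those columns every $t$-tuple over $V$ appears as a row at least $\lambda$ times. For positive integers with $2\le t\le ms$, an ordered covering array $OCA_{\lambda}(N;t,m,s,v)$ is an $N\times ms$ array over an alphabet of size $v$ whose columns are labeled by the elements of $[m\times s]$, such that for every anti-ideal $J$ of size $t$ the set of columns labeled by $J$ is $\lambda$-covered. *)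

From mathcomp Require Import all_boot all_order all_algebra.
Set Implicit Arguments. Unset Strict Implicit. Unset Printing Implicit Defensive.

(* The RT poset [m x s] is modelled on 'I_(m*s) = {0,...,ms-1}
   (element k stands for k+1 of the paper); block B_i = {i*s, ..., (i+1)*s - 1},
   i.e. a and b lie in the same block iff a %/ s = b %/ s. *)
Definition rt_le (m s : nat) (a b : 'I_(m * s)) : bool :=
  (a %/ s == b %/ s) && (a <= b).

Definition rt_ideal (m s : nat) (I : {set 'I_(m * s)}) : Prop :=
  forall a b : 'I_(m * s), b \in I -> rt_le a b -> a \in I.

Definition rt_anti_ideal (m s : nat) (J : {set 'I_(m * s)}) : Prop :=
  rt_ideal (~: J).

(* The columns in C are lambda-covered by the N x n array A over alphabet 'I_v:
   every tuple of values on the columns of C (a map C -> 'I_v, represented by a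
   function on all columns whose values outside C are irrelevant) appears as a row
   of the subarray at least lambda times. *)
Definition lambda_covered (lam N n v : nat) (A : 'M['I_v]_(N, n))
    (C : {set 'I_n}) : Prop :=
  forall f : {ffun 'I_n -> 'I_v},
    lam <= #|[set r : 'I_N | [forall c in C, A r c == f c]]|.
Arguments lambda_covered : clear implicits.

Definition OCA (lam N t m s v : nat) (A : 'M['I_v]_(N, m * s)) : Prop :=
  2 <= t <= m * s /\
  forall J : {set 'I_(m * s)}, rt_anti_ideal J -> #|J| = t ->
    lambda_covered lam N (m * s) v A J.
Arguments OCA : clear implicits.

From mathcomp Require Import all_boot all_order all_algebra.
From mathcomp Require Import zify.
Set Implicit Arguments. Unset Strict Implicit. Unset Printing Implicit Defensive.

(* Both implications select columns.  Deleting the bottom element of every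
   block embeds [m x (t-1)] into [m x t] as an up-closed subposet, so the columns
   of an OCA for [m x t] indexed by this copy form an OCA for [m x (t-1)].
   Conversely, send each element of [m x t] to the element just below it in its
   block, and the bottom of block i to the top of block i+1 (mod m).  This map
   sends anti-ideals to anti-ideals and is injective on those of size t: an
   anti-ideal containing the bottom of block i contains all t elements of that
   block, so it cannot also contain the top of block i+1, a different block since
   t <= m(t-1) forces m >= 2. *)

Section Coordinates.
Variables m s : nat.

Fact rt_of_subproof (q : 'I_m) (r : 'I_s) : q * s + r < m * s.
Proof. by have := ltn_ord q; have := ltn_ord r; nia. Qed.

Definition rt_of (q : 'I_m) (r : 'I_s) : 'I_(m * s) := Ordinal (rt_of_subproof q r).

Lemma rt_width_gt0 (a : 'I_(m * s)) : 0 < s.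
Proof. by case: s a => [|s'] [a] //=; rewrite muln0. Qed.

Fact rt_blk_subproof (a : 'I_(m * s)) : a %/ s < m.
Proof. by rewrite ltn_divLR ?(rt_width_gt0 a). Qed.

Definition rt_blk (a : 'I_(m * s)) : 'I_m := Ordinal (rt_blk_subproof a).
Definition rt_pos (a : 'I_(m * s)) : 'I_s := Ordinal (ltn_pmod a (rt_width_gt0 a)).

Lemma rt_blk_of q r : rt_blk (rt_of q r) = q.
Proof.
by apply: val_inj; rewrite /= divnMDl ?divn_small ?addn0 // (leq_ltn_trans _ (ltn_ord r)).
Qed.

Lemma rt_pos_of q r : rt_pos (rt_of q r) = r.
Proof. by apply: val_inj; rewrite /= modnMDl modn_small. Qed.

Lemma rt_ofK a : rt_of (rt_blk a) (rt_pos a) = a.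
Proof. by apply: val_inj; rewrite /= -divn_eq. Qed.

Variant rt_of_spec : 'I_(m * s) -> Type := RtOf q r : rt_of_spec (rt_of q r).

Lemma rt_ofP a : rt_of_spec a.
Proof. by rewrite -[a]rt_ofK. Qed.

Lemma eq_rt_of q r q' r' : (rt_of q r == rt_of q' r') = (q == q') && (r == r').
Proof.
apply/eqP/andP => [e | [/eqP-> /eqP->] //].
by move: (congr1 rt_blk e) (congr1 rt_pos e); rewrite !rt_blk_of !rt_pos_of => -> ->.
Qed.

Lemma rt_le_of q r q' r' : rt_le (rt_of q r) (rt_of q' r') = (q == q') && (r <= r').
Proof.
rewrite /rt_le -[_ %/ s]/(val (rt_blk (rt_of q r))) -[_ %/ s]/(val (rt_blk (rt_of q' r'))).
rewrite !rt_blk_of val_eqE; case: eqP => [-> | //] /=.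
by rewrite leq_add2l.
Qed.

Lemma card_rt_block q : #|[set rt_of q r | r : 'I_s]| = s.
Proof.
rewrite card_imset ?card_ord // => r r' /eqP.
by rewrite eq_rt_of eqxx => /eqP.
Qed.

Lemma rt_anti_idealP (J : {set 'I_(m * s)}) :
  rt_anti_ideal J <-> (forall a b, a \in J -> rt_le a b -> b \in J).
Proof.
split=> upJ a b.
- by move=> aJ ab; apply/negPn/negP => bJ; move: (upJ a b); rewrite !inE aJ => /(_ bJ ab).
- by rewrite !inE => bJ ab; apply/negP => aJ; rewrite (upJ a b aJ ab) in bJ.
Qed.

End Coordinates.

Section Shift.
Variables m s : nat.

Definition rt_shift (a : 'I_(m * s)) : 'I_(m * s.+1) :=
  rt_of (rt_blk a) (lift ord0 (rt_pos a)).

Lemma rt_shift_of q r : rt_shift (rt_of q r) = rt_of q (lift ord0 r).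
Proof. by rewrite /rt_shift rt_blk_of rt_pos_of. Qed.

Lemma rt_shift_inj : injective rt_shift.
Proof.
move=> a b; case: (rt_ofP a) => q r; case: (rt_ofP b) => q' r'.
by rewrite !rt_shift_of => /eqP; rewrite !eq_rt_of => /andP[/eqP-> /eqP/lift_inj->].
Qed.

Lemma rt_shift_anti_ideal (J : {set 'I_(m * s)}) :
  rt_anti_ideal J -> rt_anti_ideal (rt_shift @: J).
Proof.
move=> /rt_anti_idealP upJ; apply/rt_anti_idealP => _ z /imsetP[x xJ ->].
case: (rt_ofP x) xJ => q r xJ; case: (rt_ofP z) => q' r'.
rewrite rt_shift_of rt_le_of => /andP[/eqP<-].
case: (unliftP ord0 r') => [r'' -> | ->] //.
rewrite -rt_shift_of => le_rr''; apply: imset_f; apply: upJ xJ _.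
by rewrite rt_le_of eqxx.
Qed.

End Shift.

Section Fold.
Variables m s : nat.

Definition rt_fold (a : 'I_(m * s.+2)) : 'I_(m * s.+1) :=
  if unlift ord0 (rt_pos a) is Some r then rt_of (rt_blk a) r
  else rt_of (ordS (rt_blk a)) ord_max.

Lemma rt_shiftK : cancel (@rt_shift m s.+1) rt_fold.
Proof.
move=> a; case: (rt_ofP a) => q r.
by rewrite rt_shift_of /rt_fold rt_blk_of rt_pos_of liftK.
Qed.

Lemma rt_fold_bottom q : rt_fold (rt_of q ord0) = rt_of (ordS q) ord_max.
Proof. by rewrite /rt_fold rt_pos_of unlift_none rt_blk_of. Qed.

Lemma rt_fold_anti_ideal (J : {set 'I_(m * s.+2)}) :
  rt_anti_ideal J -> rt_anti_ideal (rt_fold @: J).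
Proof.
move=> /rt_anti_idealP upJ; apply/rt_anti_idealP => _ z /imsetP[x xJ ->].
case: (rt_ofP x) xJ => q r xJ; case: (rt_ofP z) => q' r'.
case: (unliftP ord0 r) xJ => [r0 -> | ->] xJ.
- rewrite -rt_shift_of rt_shiftK rt_le_of => /andP[/eqP<- le_r0r'].
  rewrite -(rt_shiftK (rt_of q r')) imset_f //; apply: upJ xJ _.
  by rewrite !rt_shift_of rt_le_of eqxx.
- rewrite rt_fold_bottom rt_le_of => /andP[/eqP<- le_maxr'].
  have -> : r' = ord_max by apply/val_inj/eqP; rewrite eqn_leq le_maxr' -ltnS ltn_ord.
  by rewrite -rt_fold_bottom imset_f.
Qed.

Lemma ordS_neq n (i : 'I_n) : 1 < n -> ordS i != i.
Proof.
move=> n_gt1; rewrite -val_eqE /=; case: (ltngtP i.+1 n) => [lt_i1n | | eq_i1n].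
- by rewrite modn_small ?gtn_eqF.
- by rewrite ltnNge ltn_ord.
- by rewrite eq_i1n modnn eq_sym -lt0n -ltnS eq_i1n.
Qed.

Lemma rt_fold_inj_anti_ideal (J : {set 'I_(m * s.+2)}) :
  1 < m -> rt_anti_ideal J -> #|J| = s.+2 -> {in J &, injective rt_fold}.
Proof.
move=> m_gt1 antiJ cardJ.
have upJ := (rt_anti_idealP J).1 antiJ.
have bottom_top q : rt_of q ord0 \in J -> rt_shift (rt_of (ordS q) ord_max) \notin J.
  set top := rt_shift _; set block := [set rt_of q r | r : 'I_s.+2].
  move=> botJ; apply/negP => topJ.
  have blockJ : block \subset J.
    by apply/subsetP => _ /imsetP[r _ ->]; apply: upJ botJ _; rewrite rt_le_of eqxx.
  have top_out : top \notin block.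
    apply/imsetP => -[r _ /eqP]; rewrite /top rt_shift_of eq_rt_of.
    by rewrite (negbTE (ordS_neq q m_gt1)).
  have /subset_leq_card : top |: block \subset J by rewrite subUset sub1set topJ blockJ.
  by rewrite cardsU1 top_out card_rt_block cardJ ltnn.
move=> a b; case: (rt_ofP a) => q r; case: (rt_ofP b) => q' r'.
case: (unliftP ord0 r) => [r0 -> | ->]; case: (unliftP ord0 r') => [r0' -> | ->].
- by rewrite -!rt_shift_of !rt_shiftK => _ _ ->.
- rewrite -rt_shift_of rt_shiftK rt_fold_bottom => aJ bJ e.
  by move: aJ; rewrite e (negbTE (bottom_top _ bJ)).
- rewrite -rt_shift_of rt_shiftK rt_fold_bottom => aJ bJ e.
  by move: bJ; rewrite -e (negbTE (bottom_top _ aJ)).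
- rewrite !rt_fold_bottom => _ _ /eqP.
  by rewrite eq_rt_of eqxx andbT => /eqP/ordS_inj->.
Qed.

End Fold.

Lemma lambda_covered_colsub lam N n n' v (g : 'I_n -> 'I_n') (B : 'M['I_v]_(N, n'))
    (C : {set 'I_n}) :
  0 < v -> {in C &, injective g} ->
  lambda_covered lam N n' v B (g @: C) -> lambda_covered lam N n v (colsub g B) C.
Proof.
move=> v_gt0 g_inj covB f.
pose f' := [ffun c' => if [pick c in C | g c == c'] is Some c then f c else Ordinal v_gt0].
apply: leq_trans (covB f') _; apply/subset_leq_card/subsetP => r.
rewrite !inE => /forall_inP rowB; apply/forall_inP => c cC.
have := rowB (g c) (imset_f g cC); rewrite mxE ffunE.
case: pickP => [c0 /andP[c0C /eqP gc0] | /(_ c)]; last by rewrite cC eqxx.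
by rewrite (g_inj _ _ c0C cC gc0).
Qed.

Lemma OCA_colsub lam N t m s s' v (g : 'I_(m * s) -> 'I_(m * s'))
    (B : 'M['I_v]_(N, m * s')) :
  0 < v -> 2 <= t <= m * s ->
  (forall J, rt_anti_ideal J -> #|J| = t -> {in J &, injective g}) ->
  (forall J, rt_anti_ideal J -> #|J| = t -> rt_anti_ideal (g @: J)) ->
  OCA lam N t m s' v B -> OCA lam N t m s v (colsub g B).
Proof.
move=> v_gt0 t_bounds g_inj g_anti [_ covB]; split=> // J aJ cardJ.
apply: lambda_covered_colsub (g_inj J aJ cardJ) _ => //.
apply: covB; first exact: g_anti.
by rewrite (card_in_imset (g_inj J aJ cardJ)).
Qed.

Theorem corollary1 (lam N t m v : nat) :
  0 < lam -> 0 < N -> 0 < t -> 0 < m -> 0 < v ->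
  2 <= t -> t <= m * (t - 1) ->
  (exists A : 'M['I_v]_(N, m * t), OCA lam N t m t v A) <->
  (exists A : 'M['I_v]_(N, m * (t - 1)), OCA lam N t m (t - 1) v A).
Proof.
move=> _ _ _ m_gt0 v_gt0; case: t => [|[|s]] // _; rewrite subn1 /= => t_le.
have m_gt1 : 1 < m by nia.
split=> [[A ocaA] | [B ocaB]].
- exists (colsub (@rt_shift m s.+1) A); apply: OCA_colsub ocaA => // J aJ _.
  + by move=> a b _ _ /rt_shift_inj.
  + exact: rt_shift_anti_ideal.
- exists (colsub (@rt_fold m s) B); apply: OCA_colsub ocaB => //.
  + by rewrite /= leq_pmull.
  + by move=> J; apply: rt_fold_inj_anti_ideal.
  + by move=> J aJ _; apply: rt_fold_anti_ideal.
Qed.
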